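(* Let $C_{TS}>0$ be a fixed absolute constant and, for a problem instance, let $N_{TS}=C_{TS}\,\varepsilon_{TS}^{-2}\log(\delta_{TS}^{-1})$ where $\varepsilon_{TS}=\min_{i,j\in[K]}\mathbb E[(\mu_i-\mu_j)_+]$ and $\delta_{TS}=\min_{i\in[K]}\Pr[A^*=i]$. Fix $M\geq 1$. Suppose each prior $\mathcal P_i$, $i\in[K]$, is a $\mathrm{Beta}(\alpha_i,\beta_i)$ distribution with $\alpha_i,\beta_i\in[1,M]$. Then $N_{TS}=O_M(\log K)$, i.e. $N_{TS}\leq c_M\log K$ for $K\geq 2$, where $c_M$ depends only on $M$ (and $C_{TS}$).
   Context: A problem instance consists of $K$ arms with mean rewards $\mu_1,\dots,\mu_K\in[0,1]$ drawn independently, $\mu_i\sim\mathcal P_i$. $A^*=\min(\arg\max_j\mu_j)$. $(x)_+=\max(x,0)$. *)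

From HB Require Import structures.
From mathcomp Require Import all_boot all_order all_algebra.
From mathcomp Require Import all_classical all_reals all_analysis.
Set Implicit Arguments. Unset Strict Implicit. Unset Printing Implicit Defensive.
Import Order.TTheory GRing.Theory Num.Theory.
Local Open Scope classical_set_scope.
Local Open Scope ring_scope.

Section defs.
Context {R : realType}.

Definition beta_dens (a b : R) (x : R) : R := x `^ (a - 1) * (1 - x) `^ (b - 1).

Definition betaB (a b : R) : R :=
  fine (\int[lebesgue_measure]_(x in `[0%R, 1%R]) (beta_dens a b x)%:E)%E.

Definition betaR_prob (a b : R) (U : set R) : \bar R :=
  ((betaB a b)^-1%:E *
   \int[lebesgue_measure]_(x in U `&` `[0%R, 1%R]) (beta_dens a b x)%:E)%E.

Context {d : measure_display} {T : measurableType d} (P : probability T R).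

(* mutual independence of a finite family of real random variables:
   product rule for every choice of Borel sets (taking B i = setT for the
   indices outside a subfamily gives the rule for every subfamily) *)
Definition mutually_independent (K : nat) (X : 'I_K -> T -> R) : Prop :=
  forall B : 'I_K -> set R, (forall i, measurable (B i)) ->
    P (\bigcap_(i in [set: 'I_K]) (X i @^-1` B i)) =
    (\prod_(i < K) P (X i @^-1` B i))%E.

(* the event {A* = i}, where A* = min (argmax_j X j) *)
Definition Astar_event (K : nat) (X : 'I_K -> T -> R) (i : 'I_K) : set T :=
  [set t | forall j : 'I_K,
      ((j < i)%N -> X j t < X i t) /\ ((i < j)%N -> X j t <= X i t)].

Definition eps_TS (K : nat) (X : 'I_K -> T -> R) : R :=
  fine (\big[Order.min/+oo%E]_(i < K) \big[Order.min/+oo%E]_(j < K | i != j)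
          'E_P[fun t => (Num.max (X i t - X j t) 0)%R])%E.

Definition delta_TS (K : nat) (X : 'I_K -> T -> R) : R :=
  fine (\big[Order.min/+oo%E]_(i < K) P (Astar_event X i))%E.

Definition N_TS (C_TS : R) (K : nat) (X : 'I_K -> T -> R) : R :=
  C_TS * (eps_TS X) ^- 2 * ln ((delta_TS X)^-1).

End defs.

(* For a, b in [1, M] the unnormalised Beta density x^(a-1) (1-x)^(b-1) is at
   most 1 on [0, 1] and at least p^(M-1) (1-q)^(M-1) on [p, q], a subset of
   (0, 1).  Hence B(a, b) lies between a constant c_M > 0 and 1, the interval
   [p, q] has Beta(a, b)-probability at least (q-p) p^(M-1) (1-q)^(M-1), and
   [s, 1] has probability at most (1-s) / c_M.
   By independence, arm i lands in [3/4, 7/8] and arm j in [1/8, 1/4] with a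
   probability depending on M only; the gap is then at least 1/2, so eps_TS is
   bounded below uniformly in K.  For delta_TS put t = c_M / K^2: arm i lands
   in [1-t, 1-t/2] with probability of order t^M, while each other arm stays
   below 1-t with probability at least 1 - 1/K^2, hence all of them do with
   probability at least 1/2 by Bernoulli's inequality.  So
   delta_TS >= (c_M / (4 K^2))^M and log (1 / delta_TS) = O_M(log K). *)

From HB Require Import structures.
From mathcomp Require Import all_boot all_order all_algebra.
From mathcomp Require Import all_classical all_reals all_analysis.
From mathcomp Require Import measurable_realfun ring lra.
Import Order.TTheory GRing.Theory Num.Theory.
Local Open Scope classical_set_scope.
Local Open Scope ring_scope.

Section beta_density.
Context {R : realType}.
Implicit Types (a b e m p q x M : R).

Lemma powR_le1 x e : 0 <= x <= 1 -> 0 <= e -> x `^ e <= 1.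
Proof.
case/andP=> x0 x1 e0; have [->|xn0] := eqVneq x 0.
  by rewrite /powR eqxx; case: (e == 0).
by rewrite -(powRr0 x) ger_powR // lt_def xn0 x0 x1.
Qed.

Lemma ler_powR_le1 p x e m : 0 < p <= x -> x <= 1 -> 0 <= e <= m ->
  p `^ m <= x `^ e.
Proof.
case/andP=> p0 px x1 /andP[e0 em]; apply: (@le_trans _ _ (p `^ e)).
  by rewrite ger_powR // p0 (le_trans px x1).
by rewrite ge0_ler_powR // nnegrE ltW // (lt_le_trans p0 px).
Qed.

Lemma beta_dens_ge0 a b x : 0 <= beta_dens a b x.
Proof. by rewrite mulr_ge0 // powR_ge0. Qed.

Lemma beta_dens_le1 a b x : 1 <= a -> 1 <= b -> 0 <= x <= 1 ->
  beta_dens a b x <= 1.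
Proof.
move=> a1 b1 /andP[x0 x1]; rewrite -[leRHS]mulr1.
by rewrite ler_pM ?powR_ge0 ?powR_le1 ?subr_ge0 ?x0 ?x1 ?gerBl.
Qed.

(* (q - p) times the minimum on [p, q] of every density beta_dens a b with
   a, b in [1, M] *)
Definition beta_mass_lb M p q : R :=
  (q - p) * p `^ (M - 1) * (1 - q) `^ (M - 1).

Lemma beta_dens_ge a b M p q x : 1 <= a <= M -> 1 <= b <= M ->
  0 < p -> q < 1 -> p <= x <= q ->
  p `^ (M - 1) * (1 - q) `^ (M - 1) <= beta_dens a b x.
Proof.
move=> ha hb p0 q1 /andP[px xq].
have x1 : x <= 1 by rewrite ltW // (le_lt_trans xq q1).
rewrite ler_pM ?powR_ge0 // ler_powR_le1 ?p0 ?px ?subr_ge0 ?lerD2r ?ha ?hb //.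
  by rewrite subr_gt0 q1 lerD2l lerN2 xq.
by rewrite gerBl (le_trans (ltW p0) px).
Qed.

Lemma measurable_beta_dens a b : measurable_fun setT (beta_dens a b).
Proof.
apply: measurable_funM; first exact: measurable_powR.
apply: (measurableT_comp (measurable_powR _)).
exact: measurable_funB.
Qed.

End beta_density.

Lemma lebesgue_measure_itvcc {R : realType} (p q : R) : p <= q ->
  lebesgue_measure (`[p, q]%classic : set R) = (q - p)%:E.
Proof.
rewrite lebesgue_measure_itv /= lte_fin le_eqVlt => /predU1P[->|->].
  by rewrite ltxx subrr.
by rewrite EFinB.
Qed.

Definition betaB_lb {R : realType} (M : R) : R := beta_mass_lb M (1/8) (7/8).

Lemma betaB_lb_gt0 {R : realType} (M : R) : 0 < betaB_lb M.
Proof. by rewrite !mulr_gt0 ?powR_gt0 //; lra. Qed.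

Lemma betaB_lb_le1 {R : realType} (M : R) : 1 <= M -> betaB_lb M <= 1.
Proof.
move=> M1; have e0 : 0 <= M - 1 by rewrite subr_ge0.
rewrite -[leRHS]mulr1 ler_pM ?powR_ge0 ?powR_le1 //; try lra.
  by rewrite mulr_ge0 ?powR_ge0 //; lra.
by rewrite -[leRHS]mulr1 ler_pM ?powR_ge0 ?powR_le1 //; lra.
Qed.

Lemma beta_mass_lb_top_ge {R : realType} (M t : R) : 1 <= M -> 0 < t <= 1/2 ->
  2 * (t / 4) `^ M <= beta_mass_lb M (1 - t) (1 - t / 2).
Proof.
move=> M1 /andP[t0 t12]; have M0 : 0 < M by lra.
rewrite /beta_mass_lb (_ : 1 - t / 2 - (1 - t) = t / 2); last by field.
rewrite (_ : 1 - (1 - t / 2) = t / 2); last by field.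
rewrite (_ : t / 4 = 1 / 2 * (t / 2)); last by field.
rewrite -(mulr_powRB1 _ M0); last lra.
rewrite [(1 / 2 * _) `^ _]powRM; [|lra|lra].
rewrite mulrA (_ : 2 * (1 / 2 * (t / 2)) = t / 2); last by field.
rewrite -[leRHS]mulrA ler_pM2l; last lra.
by rewrite ler_pM2r ?powR_gt0 ?ge0_ler_powR ?nnegrE ?subr_ge0 //; lra.
Qed.

Section beta_law.
Context {R : realType}.
Variables (M a b : R).
Hypotheses (ha : 1 <= a <= M) (hb : 1 <= b <= M).
Local Open Scope ereal_scope.

Let a1 : (1 <= a)%R. Proof. by case/andP: ha. Qed.
Let b1 : (1 <= b)%R. Proof. by case/andP: hb. Qed.

Let measurable_beta_densE : measurable_fun setT (EFin \o beta_dens a b).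
Proof. by apply/measurable_EFinP; exact: measurable_beta_dens. Qed.

Lemma integral_beta_dens_le (V : set R) : measurable V -> V `<=` `[0%R, 1%R] ->
  \int[lebesgue_measure]_(x in V) (beta_dens a b x)%:E <= lebesgue_measure V.
Proof.
move=> mV V01; rewrite -[leRHS]mul1e -integral_cst //.
apply: ge0_le_integral => //.
- by move=> x _; rewrite lee_fin beta_dens_ge0.
- exact: measurable_funS measurable_beta_densE.
- by move=> x /V01; rewrite /= in_itv /= => x01; rewrite lee_fin beta_dens_le1.
Qed.

Lemma integral_beta_dens_itv_ge {p q : R} : (0 < p)%R -> (p <= q)%R -> (q < 1)%R ->
  (beta_mass_lb M p q)%:E <= \int[lebesgue_measure]_(x in `[p, q]) (beta_dens a b x)%:E.
Proof.
move=> p0 pq q1; set k := (p `^ (M - 1) * (1 - q) `^ (M - 1))%R.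
have -> : beta_mass_lb M p q = ((q - p) * k)%R by rewrite /beta_mass_lb mulrA.
rewrite EFinM muleC -lebesgue_measure_itvcc // -integral_cst //.
apply: ge0_le_integral => //.
- by move=> x _; rewrite lee_fin mulr_ge0 ?powR_ge0.
- exact: measurable_funS measurable_beta_densE.
- by move=> x; rewrite /= in_itv /= => xpq; rewrite lee_fin beta_dens_ge.
Qed.

Let integral_beta_dens01_fin :
  \int[lebesgue_measure]_(x in `[0%R, 1%R]) (beta_dens a b x)%:E \is a fin_num.
Proof.
rewrite ge0_fin_numE; last by apply: integral_ge0 => x _; rewrite lee_fin beta_dens_ge0.
apply: le_lt_trans (integral_beta_dens_le _ (measurable_itv _) (@subset_refl _ _)) _.
by rewrite lebesgue_measure_itvcc // ltry.
Qed.

Lemma betaB_le1 : (betaB a b <= 1)%R.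
Proof.
rewrite -lee_fin fineK //.
apply: le_trans (integral_beta_dens_le _ (measurable_itv _) (@subset_refl _ _)) _.
by rewrite lebesgue_measure_itvcc // subr0.
Qed.

Lemma betaB_ge : (betaB_lb M <= betaB a b)%R.
Proof.
rewrite -lee_fin fineK //.
apply: (le_trans (@integral_beta_dens_itv_ge (1/8) (7/8) _ _ _)); [lra..|].
apply: ge0_subset_integral => //.
- exact: measurable_funS measurable_beta_densE.
- by move=> x _; rewrite lee_fin beta_dens_ge0.
- by move=> x; rewrite /= !in_itv /= => /andP[? ?]; apply/andP; split; lra.
Qed.

Let betaB_gt0 : (0 < betaB a b)%R.
Proof. exact: lt_le_trans (betaB_lb_gt0 M) betaB_ge. Qed.

Lemma betaR_prob_itv_ge (p q : R) : (0 < p)%R -> (p <= q)%R -> (q < 1)%R ->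
  (beta_mass_lb M p q)%:E <= betaR_prob a b `[p, q].
Proof.
move=> p0 pq q1; rewrite /betaR_prob setIidl; last first.
  by move=> x; rewrite /= !in_itv /= => /andP[? ?]; apply/andP; split; lra.
apply: le_trans (integral_beta_dens_itv_ge p0 pq q1) _.
apply: lee_pemull; first by apply: integral_ge0 => x _; rewrite lee_fin beta_dens_ge0.
by rewrite lee_fin invf_ge1 ?betaB_le1.
Qed.

Lemma betaR_prob_itvcy_le (s : R) : (0 <= s <= 1)%R ->
  betaR_prob a b `[s, +oo[ <= ((1 - s) / betaB_lb M)%:E.
Proof.
move=> /andP[s0 s1]; rewrite /betaR_prob.
have -> : `[s, +oo[ `&` `[0%R, 1%R] = `[s, 1%R]%classic :> set R.
  apply/seteqP; split => x; rewrite /= !in_itv /= ?andbT.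
    by case=> sx /andP[_ ->]; rewrite sx.
  by move=> /andP[sx x1]; rewrite sx x1 (le_trans s0 sx).
have sub01 : `[s, 1%R] `<=` `[0%R, 1%R].
  by move=> x; rewrite /= !in_itv /= => /andP[? ?]; apply/andP; split; lra.
apply: le_trans
  (lee_wpmul2l _ (integral_beta_dens_le _ (measurable_itv _) sub01)) _ => //.
  by rewrite lee_fin invr_ge0 ltW.
rewrite lebesgue_measure_itvcc // -EFinM lee_fin mulrC ler_wpM2l ?subr_ge0 //.
by rewrite lef_pV2 ?posrE ?betaB_lb_gt0 ?betaB_ge.
Qed.

End beta_law.

Section beta_random_variable.
Context {R : realType} {d : measure_display} {T : measurableType d}.
Context (P : probability T R) {M a b : R} {X : {RV P >-> R}}.
Hypotheses (ha : 1 <= a <= M) (hb : 1 <= b <= M).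
Hypothesis X_beta : forall U, measurable U -> P (X @^-1` U) = betaR_prob a b U.
Local Open Scope ereal_scope.

Lemma beta_preimage_itv_ge (p q : R) : (0 < p)%R -> (p <= q)%R -> (q < 1)%R ->
  (beta_mass_lb M p q)%:E <= P (X @^-1` `[p, q]).
Proof. by move=> p0 pq q1; rewrite X_beta //; exact: betaR_prob_itv_ge. Qed.

Lemma beta_preimage_itvNyo_ge (s : R) : (0 <= s <= 1)%R ->
  (1 - (1 - s) / betaB_lb M)%:E <= P (X @^-1` `]-oo, s[).
Proof.
move=> s01; have mXs : measurable (X @^-1` `[s, +oo[) by exact: measurable_funPTI.
rewrite -setCitvr -preimage_setC probability_setC // EFinB leeB //.
by rewrite X_beta //; exact: betaR_prob_itvcy_le.
Qed.

End beta_random_variable.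

Lemma lee_prod_EFin {R : realType} (I : Type) (r : seq I) (g : I -> R)
    (F : I -> \bar R) :
  (forall i, 0 <= g i) -> (forall i, ((g i)%:E <= F i)%E) ->
  ((\prod_(i <- r) g i)%:E <= \prod_(i <- r) F i)%E.
Proof.
move=> g0 gF; suff [] : 0 <= \prod_(i <- r) g i /\
    ((\prod_(i <- r) g i)%:E <= \prod_(i <- r) F i)%E by [].
apply: (big_ind2 (fun x y => 0 <= x /\ (x%:E <= y)%E)) => //.
move=> x1 y1 x2 y2 [x10 h1] [x20 h2]; split; first exact: mulr_ge0.
by rewrite EFinM lee_pmul ?lee_fin.
Qed.

Section independent_family.
Context {R : realType} {d : measure_display} {T : measurableType d}.
Context (P : probability T R) {K : nat} {X : 'I_K -> {RV P >-> R}}.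
Hypothesis X_indep : mutually_independent P (fun i => X i : T -> R).
Local Open Scope ereal_scope.

Lemma independent_bigcap_ge (B : 'I_K -> set R) (g : 'I_K -> R) :
  (forall k, measurable (B k)) -> (forall k, (0 <= g k)%R) ->
  (forall k, (g k)%:E <= P (X k @^-1` B k)) ->
  (\prod_(k < K) g k)%:E <= P (\bigcap_(k in [set: 'I_K]) (X k @^-1` B k)).
Proof. by move=> mB g0 gP; rewrite X_indep //; exact: lee_prod_EFin. Qed.

Lemma independent_pair_ge (i j : 'I_K) (A B : set R) (gA gB : R) : i != j ->
  measurable A -> measurable B -> (0 <= gA)%R -> (0 <= gB)%R ->
  gA%:E <= P (X i @^-1` A) -> gB%:E <= P (X j @^-1` B) ->
  (gA * gB)%:E <= P (X i @^-1` A `&` X j @^-1` B).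
Proof.
move=> ij mA mB gA0 gB0 hA hB.
pose C k := if k == i then A else if k == j then B else setT.
pose g k := if k == i then gA else if k == j then gB else 1%R.
have ji : (j == i) = false by rewrite eq_sym (negbTE ij).
have -> : X i @^-1` A `&` X j @^-1` B = \bigcap_(k in [set: 'I_K]) (X k @^-1` C k).
  apply/seteqP; split => [t [hi hj] k _|t H]; last first.
    by split; [have := H i I|have := H j I]; rewrite /C ?eqxx ?ji.
  by rewrite /C; case: eqP => [->//|_]; case: eqP => [->//|].
have -> : (gA * gB = \prod_(k < K) g k)%R.
  rewrite (bigD1 i) //= (bigD1 j) 1?eq_sym //= big1 ?mulr1 /g ?eqxx ?ji ?mulrA //.
  by move=> k /andP[/negbTE -> /negbTE ->].
apply: independent_bigcap_ge => k; rewrite /C /g.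
- by case: eqP => _ //; case: eqP.
- by case: eqP => _ //; case: eqP.
- case: eqP => [->//|_]; case: eqP => [->//|_].
  by rewrite preimage_setT probability_setT.
Qed.

Lemma measurable_Astar_event (i : 'I_K) :
  measurable (Astar_event (fun k => X k : T -> R) i).
Proof.
have mimp (b : bool) (A : set T) : measurable A -> measurable [set t | b -> A t].
  case: b => mA; last by rewrite [E in measurable E](_ : _ = setT) //; apply/seteqP.
  by rewrite [E in measurable E](_ : _ = A) //; apply/seteqP; split=> t //=; apply.
have -> : Astar_event (fun k => X k : T -> R) i = \bigcap_(j in [set: 'I_K])
    [set t | ((j < i)%N -> X j t < X i t) /\ ((i < j)%N -> X j t <= X i t)]%R.
  by apply/seteqP; split=> [t H j _|t H j]; [exact: H|exact: H].
apply: fin_bigcap_measurable => // j _; apply: measurableI; apply: mimp.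
- by rewrite -[E in measurable E]setTI; apply: measurable_fun_ltr.
- by rewrite -[E in measurable E]setTI; apply: measurable_fun_ler.
Qed.

End independent_family.

Lemma expectation_gap_ge {R : realType} {d : measure_display} {T : measurableType d}
    (P : probability T R) (X Y : {RV P >-> R}) (A B : set R) (u v : R) :
  measurable A -> measurable B -> (forall x, A x -> u <= x) ->
  (forall y, B y -> y <= v) -> v <= u ->
  ((u - v)%:E * P (X @^-1` A `&` Y @^-1` B) <=
   'E_P[fun t => (Num.max (X t - Y t) 0)%R])%E.
Proof.
move=> mA mB Au Bv vu; set S := X @^-1` A `&` Y @^-1` B.
have mS : measurable S by apply: measurableI; exact: measurable_funPTI.
rewrite -(expectation_indic P mS) unlock -ge0_integralZl_EFin ?subr_ge0 //; last first.
  by apply/measurable_EFinP; exact: measurable_indic.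
apply: ge0_le_integral => //.
- by move=> t _; rewrite -EFinM lee_fin mulr_ge0 ?subr_ge0.
- by apply: measurable_funeM; apply/measurable_EFinP; exact: measurable_indic.
- by apply/measurable_EFinP; apply: measurable_maxr => //; exact: measurable_funB.
- move=> t _; rewrite -EFinM lee_fin indicE.
  have [/set_mem [/Au ut /Bv vt]|_] := boolP (t \in S).
    by rewrite mulr1 le_max lerB ?ut ?vt.
  by rewrite mulr0 le_max lexx orbT.
Qed.

Lemma bernoulli_ineq {R : realDomainType} (x : R) (n : nat) : x <= 1 ->
  1 - n%:R * x <= (1 - x) ^+ n.
Proof.
move=> x1; elim: n => [|n IH]; first by rewrite mul0r subr0 expr0.
have x10 : 0 <= 1 - x by rewrite subr_ge0.
rewrite exprSr -natr1; apply: le_trans (ler_wpM2r x10 IH).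
rewrite -subr_ge0 (_ : _ - _ = n%:R * (x * x)); last by ring.
by rewrite mulr_ge0 ?ler0n // -expr2 sqr_ge0.
Qed.

Lemma exprn_1B_inv_sqr_ge {R : realFieldType} (K : nat) : (2 <= K)%N ->
  1 / 2 <= (1 - (K%:R ^+ 2)^-1) ^+ K :> R.
Proof.
move=> K2; have K2r : (2 <= K%:R :> R) by rewrite (ler_nat R 2 K).
have K0 : (0 < K%:R :> R) by lra.
have K1 : ((K%:R ^+ 2)^-1 <= 1 :> R) by rewrite invf_le1 ?exprn_gt0 // expr2; nra.
apply: le_trans (bernoulli_ineq _ K K1).
rewrite expr2 invfM mulrA (divff (lt0r_neq0 K0)) mul1r.
suff : (K%:R^-1 <= 2^-1 :> R) by lra.
by rewrite lef_pV2 ?posrE //; lra.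
Qed.

Lemma ln_inv_powR_le {R : realType} (c M k : R) : 0 < c <= 1 -> 0 <= M -> 2 <= k ->
  ln ((c / k ^+ 2) `^ M)^-1 <= M * (2 - ln c / ln 2) * ln k.
Proof.
move=> /andP[c0 c1] M0 k2; have k0 : 0 < k by lra.
have l2 : 0 < ln (2 : R) by rewrite ln_gt0 //; lra.
have lk : ln 2 <= ln k by rewrite ler_ln ?posrE //; lra.
have ck : 0 < c / k ^+ 2 by rewrite divr_gt0 ?exprn_gt0.
rewrite lnV ?posrE ?powR_gt0 // ln_powR ln_div ?posrE ?exprn_gt0 // lnXn //.
have lc : - ln c <= - ln c / ln 2 * ln k.
  by rewrite -mulrA ler_peMr ?oppr_ge0 ?ln_le0 // ler_pdivlMl // mulr1.
rewrite -mulrN opprB (_ : M * _ * ln k = M * (ln k *+ 2 + - ln c / ln 2 * ln k)).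
  by rewrite ler_wpM2l // lerD2l.
by rewrite mulr2n; ring.
Qed.

Section TS_parameters.
Context {R : realType} {d : measure_display} {T : measurableType d}.
Context (P : probability T R) {K : nat} {X : 'I_K -> T -> R}.
Local Open Scope ereal_scope.

Lemma eps_TS_expr2_le (e : R) : (0 < e)%R ->
  (forall i j, i != j -> e%:E <= 'E_P[fun t => (Num.max (X i t - X j t) 0)%R]) ->
  (eps_TS P X ^- 2 <= e ^- 2)%R.
Proof.
move=> e0 eE; rewrite /eps_TS.
(* if the minimum is +oo then eps_TS = fine +oo = 0 and 0 ^- 2 = 0 *)
set m := (\big[Order.min/+oo]_(i < K) _)%E.
have : e%:E <= m.
  apply: le_bigmin => [|i _]; first exact: leey.
  by apply: le_bigmin => [|j ij]; [exact: leey|exact: eE].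
case: m => [r| |] //= er; last by rewrite expr0n /= invr0 invr_ge0 exprn_ge0 // ltW.
rewrite lee_fin in er; have r0 := lt_le_trans e0 er.
by rewrite lef_pV2 ?posrE ?exprn_gt0 // lerXn2r ?nnegrE // ltW.
Qed.

Lemma delta_TS_bounds (c : R) : (0 < K)%N ->
  (forall i, measurable (Astar_event X i)) ->
  (forall i, c%:E <= P (Astar_event X i)) -> (c <= delta_TS P X <= 1)%R.
Proof.
move=> K0 mA cA; rewrite /delta_TS.
set m := (\big[Order.min/+oo]_(i < K) _)%E.
have cm : c%:E <= m by apply: le_bigmin => [|i _]; [exact: leey|exact: cA].
have m1 : m <= 1.
  by apply: le_trans (bigmin_le _ (Ordinal K0) _) (probability_le1 P (mA _)).
have [r mr] : exists r, m = r%:E.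
  by case: m cm m1 => [r| |] //; exists r.
by rewrite mr /= -!lee_fin -mr cm m1.
Qed.

Lemma mem_Astar_event (i : 'I_K) (s : R) (t : T) : (s <= X i t)%R ->
  (forall j, j != i -> (X j t < s)%R) -> Astar_event X i t.
Proof.
move=> si jsi j; have [->|/jsi js] := eqVneq j i; first by rewrite ltnn.
by split=> _; [|apply: ltW]; exact: lt_le_trans si.
Qed.

Lemma N_TS_le (C e c : R) : (0 <= C)%R -> (eps_TS P X ^- 2 <= e ^- 2)%R ->
  (0 < c)%R -> (c <= delta_TS P X <= 1)%R ->
  (N_TS P C X <= C * e ^- 2 * ln c^-1)%R.
Proof.
move=> C0 epsE c0 /andP[cd d1]; rewrite /N_TS.
have d0 := lt_le_trans c0 cd.
have ln0 : (0 <= ln (delta_TS P X)^-1)%R by rewrite ln_ge0 // invf_ge1.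
apply: ler_pM; rewrite ?mulr_ge0 ?invr_ge0 ?sqr_ge0 ?ler_wpM2l //.
by rewrite ler_ln ?posrE ?invr_gt0 // lef_pV2.
Qed.

End TS_parameters.

Section beta_family.
Context {R : realType} {d : measure_display} {T : measurableType d}.
Context (P : probability T R) {K : nat} {M : R} {alpha beta : 'I_K -> R}.
Context {mu : 'I_K -> {RV P >-> R}}.
Hypotheses (halpha : forall i, 1 <= alpha i <= M) (hbeta : forall i, 1 <= beta i <= M).
Hypothesis mu_indep : mutually_independent P (fun i => mu i : T -> R).
Hypothesis mu_beta : forall i U, measurable U ->
  P (mu i @^-1` U) = betaR_prob (alpha i) (beta i) U.
Local Open Scope ereal_scope.

Lemma expectation_gap_beta_ge (i j : 'I_K) : i != j ->
  (2^-1 * beta_mass_lb M (1/8) (1/4) ^+ 2)%:E <=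
  'E_P[fun t => (Num.max (mu i t - mu j t) 0)%R].
Proof.
move=> ij; set m := beta_mass_lb M (1/8) (1/4).
have m0 : (0 <= m)%R by rewrite !mulr_ge0 ?powR_ge0 //; lra.
have mE : m = beta_mass_lb M (3/4) (7/8).
  rewrite /m /beta_mass_lb (_ : 1 - 1/4 = 3/4 :> R)%R; last by field.
  rewrite (_ : 1 - 7/8 = 1/8 :> R)%R; last by field.
  rewrite (_ : 7/8 - 3/4 = 1/4 - 1/8 :> R)%R; last by field.
  by rewrite mulrAC.
have gap := @expectation_gap_ge _ _ _ P (mu i) (mu j)
  `[(3/4)%R, (7/8)%R]%classic `[(1/8)%R, (1/4)%R]%classic (3/4)%R (1/4)%R.
apply: le_trans (gap _ _ _ _ _).
- rewrite (_ : 2^-1 = 3/4 - 1/4 :> R)%R; last by field.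
  rewrite EFinM; apply: lee_wpmul2l; first by rewrite lee_fin; lra.
  rewrite expr2 {1}mE; apply: independent_pair_ge => //; try exact: measurable_itv.
  + by rewrite -mE.
  + by apply: (beta_preimage_itv_ge P (halpha i) (hbeta i) (mu_beta i)); lra.
  + by apply: (beta_preimage_itv_ge P (halpha j) (hbeta j) (mu_beta j)); lra.
- exact: measurable_itv.
- exact: measurable_itv.
- by move=> x; rewrite /= in_itv /= => /andP[].
- by move=> y; rewrite /= in_itv /= => /andP[].
- lra.
Qed.

Lemma Astar_event_beta_ge (i : 'I_K) : (2 <= K)%N ->
  ((betaB_lb M / 4 / K%:R ^+ 2) `^ M)%:E <=
  P (Astar_event (fun k => mu k : T -> R) i).
Proof.
move=> K2; have M1 : (1 <= M)%R by case/andP: (halpha i) => /le_trans; apply.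
have c0 := betaB_lb_gt0 M; have c1 := betaB_lb_le1 M M1.
set c := betaB_lb M in c0 c1 *.
have K2r : (2 <= K%:R :> R)%R by rewrite (ler_nat R 2 K).
have KK : (4 <= K%:R ^+ 2 :> R)%R by rewrite expr2; nra.
set t := (c / K%:R ^+ 2)%R.
have t0 : (0 < t)%R by rewrite divr_gt0 //; lra.
have t14 : (t <= 1/4)%R by rewrite ler_pdivrMr; lra.
have tc : (t / c = (K%:R ^+ 2)^-1)%R by rewrite mulrAC divff ?mul1r // gt_eqF.
have tc1 : (0 <= 1 - t / c)%R by rewrite subr_ge0 tc invf_le1; lra.
have mass_ge := @beta_mass_lb_top_ge R M t M1 ltac:(lra).
have mass0 : (0 <= beta_mass_lb M (1 - t) (1 - t / 2))%R.
  by apply: le_trans mass_ge; rewrite mulr_ge0 ?powR_ge0.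
(* Arm i lands in [1-t, 1-t/2] and every other arm stays below 1-t; the factor
   1 - t/c = 1 - 1/K^2 is also put on index i, so the product is a K-th power. *)
pose B k := if k == i then `[(1 - t)%R, (1 - t / 2)%R]%classic
  else `]-oo, (1 - t)%R[%classic.
pose g k := ((if k == i then beta_mass_lb M (1 - t) (1 - t / 2) else 1)
  * (1 - t / c))%R.
have mB k : measurable (B k) by rewrite /B; case: eqP.
have sub : \bigcap_(k in [set: 'I_K]) (mu k @^-1` B k) `<=`
    Astar_event (fun k => mu k : T -> R) i.
  move=> w Hw; apply: (mem_Astar_event i (1 - t)%R) => [|j ji].
    by have := Hw i I; rewrite /B eqxx /= in_itv /= => /andP[].
  by have := Hw j I; rewrite /B (negbTE ji) /= in_itv.
apply: le_trans (le_measure _ _ _ sub); last 2 first.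
- by rewrite inE; apply: fin_bigcap_measurable => // k _; exact: measurable_funPTI.
- by rewrite inE; exact: measurable_Astar_event.
apply: le_trans (independent_bigcap_ge P mu_indep B g mB _ _).
- rewrite big_split /= prodr_const card_ord (bigD1 i) //= eqxx big1 ?mulr1;
    last by move=> k /negbTE ->.
  rewrite lee_fin (_ : c / 4 / _ = t / 4)%R; last by rewrite mulrAC.
  rewrite tc.
  apply: le_trans (ler_pM _ _ mass_ge (@exprn_1B_inv_sqr_ge R K K2)) => //.
  + lra.
  + by rewrite mulr_ge0 ?powR_ge0.
- by move=> k; rewrite /g mulr_ge0 //; case: eqP.
- move=> k; rewrite /g /B; case: eqP => [->|_].
    have := beta_preimage_itv_ge P (halpha i) (hbeta i) (mu_beta i)
      (1 - t)%R (1 - t / 2)%R.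
    move/(_ ltac:(lra) ltac:(lra) ltac:(lra)); apply: le_trans.
    by rewrite lee_fin ler_piMr // gerBl divr_ge0 // ltW.
  have := beta_preimage_itvNyo_ge P (halpha k) (hbeta k) (mu_beta k) (1 - t)%R.
  by rewrite mul1r subKr; apply; lra.
Qed.

End beta_family.

Theorem corollary3p4 (R : realType) (C_TS : R) (hC : 0 < C_TS)
    (M : R) (hM : 1 <= M) :
  exists c_M : R, forall K : nat, (2 <= K)%N ->
  forall alpha beta : 'I_K -> R,
    (forall i, 1 <= alpha i <= M) -> (forall i, 1 <= beta i <= M) ->
  forall (d : measure_display) (T : measurableType d) (P : probability T R)
         (mu : 'I_K -> {RV P >-> R}),
    mutually_independent P (fun i => mu i : T -> R) ->
    (forall i (U : set R), measurable U ->
       P (mu i @^-1` U) = betaR_prob (alpha i) (beta i) U) ->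
    N_TS P C_TS (fun i => mu i : T -> R) <= c_M * ln K%:R.
Proof.
pose m := beta_mass_lb M (1/8) (1/4).
pose c := betaB_lb M / 4.
have e0 : 0 < 2^-1 * m ^+ 2.
  by rewrite mulr_gt0 ?exprn_gt0 // /m !mulr_gt0 ?powR_gt0 //; lra.
have c01 : 0 < c <= 1.
  by have := betaB_lb_le1 M hM; have := betaB_lb_gt0 M; rewrite /c; lra.
exists (C_TS * (2^-1 * m ^+ 2) ^- 2 * (M * (2 - ln c / ln 2))).
move=> K K2 alpha beta ha hb d T P mu mu_indep mu_beta.
have K2r : (2 <= K%:R :> R) by rewrite (ler_nat R 2 K).
have delta0 : 0 < (c / K%:R ^+ 2) `^ M by rewrite powR_gt0 // divr_gt0 ?exprn_gt0; lra.
apply: le_trans (N_TS_le P _ (2^-1 * m ^+ 2) _ (ltW hC) _ delta0 _) _.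
- apply: eps_TS_expr2_le => // i j.
  exact: (expectation_gap_beta_ge P ha hb mu_indep mu_beta).
- apply: delta_TS_bounds => [|i|i]; first exact: ltnW.
    exact: measurable_Astar_event.
  exact: (Astar_event_beta_ge P ha hb mu_indep mu_beta).
rewrite -[leRHS]mulrA ler_wpM2l ?mulr_ge0 ?invr_ge0 ?exprn_ge0 ?(ltW hC) ?(ltW e0) //.
by apply: ln_inv_powR_le => //; lra.
Qed.
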